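(* Let $I$ be a conditional indicator w.r.t. $\mathcal{H}$ with domain $\mathbb{D}_I=\mathbb{L}^1(\mathbb{R},\mathcal{F})$ such that: (1) $I^*=I$; (2) $I$ is sub-additive (respectively super-additive); (3) $E(|I(X)|)\le E(|X|)$ for all $X\in\mathbb{L}^1(\mathbb{R},\mathcal{F})$. Then $I(X)=E(X\mid\mathcal{H})$ for all $X\in\mathbb{L}^1(\mathbb{R},\mathcal{F})$.
   Context: Let $(\Omega,\mathcal{F},\mathbb{P})$ be a probability space with $\mathcal{F}$ complete, and $\mathcal{H}\subseteq\mathcal{F}$ a complete sub-$\sigma$-algebra. $\overline{\mathbb{R}}=\mathbb{R}\cup\{\pm\infty\}$ with conventions $r\pm\infty=\pm\infty$, $\infty-\infty=0$, $\infty+\infty=\infty$, $0\times(\pm\infty)=0$; $\mathbb{L}^0(G,\mathcal{G})$ is the set of $\mathcal{G}$-measurable random variables a.s. valued in $G$, $\mathbb{L}^1(\mathbb{R},\mathcal{F})$ the integrable real ones. $\operatorname{ess\,sup}_{\mathcal{H}}(X)$ is the smallest $\mathcal{H}$-measurable random variable dominating $X$ a.s., $\operatorname{ess\,inf}_{\mathcal{H}}(X)=-\operatorname{ess\,sup}_{\mathcal{H}}(-X)$. A conditional indicator w.r.t. $\mathcal{H}$ is a map $I:\mathbb{D}_I\to\mathbb{L}^0(\overline{\mathbb{R}},\mathcal{H})$, $0\in\mathbb{D}_I\subseteq\mathbb{L}^0(\overline{\mathbb{R}},\mathcal{F})$, with $I(X)\in[\operatorname{ess\,inf}_{\mathcal{H}}(X),\operatorname{ess\,sup}_{\mathcal{H}}(X)]$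 a.s. and $\mathbb{D}_I+\mathbb{L}^0(\overline{\mathbb{R}},\mathcal{H})\subseteq\mathbb{D}_I$. The dual is $I^*(X)=-I(-X)$ on $-\mathbb{D}_I$. Sub-additive: $I(X+Y)\le I(X)+I(Y)$; super-additive: $I(X+Y)\ge I(X)+I(Y)$. *)

From HB Require Import structures.
From mathcomp Require Import all_boot all_order all_algebra.
From mathcomp Require Import all_classical all_reals all_analysis.
From mathcomp Require Import measurable_realfun lebesgue_measure lebesgue_integral.
Set Implicit Arguments. Unset Strict Implicit. Unset Printing Implicit Defensive.
Import Order.TTheory GRing.Theory Num.Theory.
Local Open Scope classical_set_scope.
Local Open Scope ring_scope.
Local Open Scope ereal_scope.

Definition complete_sub_sigma d (T : measurableType d) (R : realType)
  (P : probability T R) (H : set (set T)) :=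
  [/\ sigma_algebra setT H, H `<=` measurable & P.-negligible `<=` H].

Definition Hmeas_bar d (T : measurableType d) (R : realType)
  (H : set (set T)) (f : T -> \bar R) :=
  forall B : set (\bar R), measurable B -> H (f @^-1` B).

Definition Hmeas_real d (T : measurableType d) (R : realType)
  (H : set (set T)) (f : T -> R) :=
  forall B : set R, measurable B -> H (f @^-1` B).

Definition L1 d (T : measurableType d) (R : realType)
  (P : probability T R) (X : T -> R) :=
  measurable_fun setT X /\ P.-integrable setT (EFin \o X).

Definition is_ess_supH d (T : measurableType d) (R : realType)
  (P : probability T R) (H : set (set T)) (X Z : T -> \bar R) :=
  [/\ Hmeas_bar H Z,
      \forall w \ae P, X w <= Z w &
      forall Z', Hmeas_bar H Z' -> (\forall w \ae P, X w <= Z' w) ->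
        \forall w \ae P, Z w <= Z' w].

Definition is_ess_infH d (T : measurableType d) (R : realType)
  (P : probability T R) (H : set (set T)) (X Z : T -> \bar R) :=
  is_ess_supH P H (fun w => - X w) (fun w => - Z w).

(* I is a map on (representatives of) L^1 r.v.'s, compatible with a.s.
   equality, valued in H-measurable extended-real r.v.'s, and with
   ess inf_H X <= I X <= ess sup_H X a.s. *)
Definition cond_indicator_L1 d (T : measurableType d) (R : realType)
  (P : probability T R) (H : set (set T)) (I : (T -> R) -> (T -> \bar R)) :=
  [/\ forall X, L1 P X -> Hmeas_bar H (I X),
      forall X X', L1 P X -> L1 P X' -> X = X' %[ae P] -> I X = I X' %[ae P],
      forall X Z, L1 P X -> is_ess_supH P H (EFin \o X) Z ->
        \forall w \ae P, I X w <= Z w &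
      forall X Z, L1 P X -> is_ess_infH P H (EFin \o X) Z ->
        \forall w \ae P, Z w <= I X w].

Definition dual_ind (T : Type) (R : realType)
  (I : (T -> R) -> (T -> \bar R)) : (T -> R) -> (T -> \bar R) :=
  fun X w => - I (fun t => - X t)%R w.

Definition subadditive_L1 d (T : measurableType d) (R : realType)
  (P : probability T R) (I : (T -> R) -> (T -> \bar R)) :=
  forall X Y, L1 P X -> L1 P Y ->
    \forall w \ae P, I (X \+ Y)%R w <= I X w + I Y w.

Definition superadditive_L1 d (T : measurableType d) (R : realType)
  (P : probability T R) (I : (T -> R) -> (T -> \bar R)) :=
  forall X Y, L1 P X -> L1 P Y ->
    \forall w \ae P, I X w + I Y w <= I (X \+ Y)%R w.

Definition is_cond_exp d (T : measurableType d) (R : realType)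
  (P : probability T R) (H : set (set T)) (X Y : T -> R) :=
  [/\ Hmeas_real H Y, P.-integrable setT (EFin \o Y) &
      forall A, H A ->
        \int[P]_(w in A) (Y w)%:E = \int[P]_(w in A) (X w)%:E].

From HB Require Import structures.
From mathcomp Require Import all_boot all_order all_algebra.
From mathcomp Require Import all_classical all_reals all_analysis.
From mathcomp Require Import measurable_realfun lebesgue_measure lebesgue_integral.
From mathcomp Require Import lra.
Import Order.TTheory GRing.Theory Num.Theory.
Set Implicit Arguments. Unset Strict Implicit. Unset Printing Implicit Defensive.
Local Open Scope classical_set_scope.
Local Open Scope ring_scope.
Local Open Scope ereal_scope.

(** Let [Ir X] be the real-valued version of [I X].  [Ir] fixes every
    H-measurable integrable variable (which is its own ess sup_H and ess inf_H),
    and self-duality turns sub- or super-additivity into additivity, so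
    [Ir (X - Ir X + U) = U] for every H-measurable integrable [U]; the contraction
    property then gives [E|U| <= E|X - Ir X + U|].  Taking [U = s n] for an
    H-measurable sign [s] gives [E|s (X - Ir X) + n| >= n] for all [n], and since
    [|a + n| - n] tends to [a] under the bound [|a|], [E[s (X - Ir X)] >= 0]; with
    [-s] in place of [s] this is an equality.  The same orthogonality holds for
    [X - Y] when [Y = E(X | H)] and [s] is [1] on an H-set and [-1] off it; for
    the set [{Y < Ir X}] the difference of the two identities reads
    [E|Ir X - Y| = 0]. *)

Lemma norm_add_scale_sign (R : realDomainType) (s x n : R) :
  `|s|%R = 1%R -> `|x + s * n|%R = `|s * x + n|%R.
Proof.
have [s_ge0|s_lt0] := leP 0%R s.
  by rewrite ger0_norm // => ->; rewrite !mul1r.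
rewrite ltr0_norm // => /eqP; rewrite eqr_oppLR => /eqP ->.
by rewrite !mulN1r -[in RHS]normrN opprD opprK.
Qed.

Section L1_probability.
Context d (T : measurableType d) (R : realType) (P : probability T R).

Lemma L1D (X Y : T -> R) : L1 P X -> L1 P Y -> L1 P (X \+ Y)%R.
Proof.
move=> [mX iX] [mY iY]; split; first exact: measurable_funD.
exact: (integrableD measurableT iX iY).
Qed.

Lemma L1N (X : T -> R) : L1 P X -> L1 P (fun t => - X t)%R.
Proof.
move=> [mX iX]; split; first exact: measurableT_comp.
exact: (integrableN iX).
Qed.

Lemma L1_cst (r : R) : L1 P (cst r).
Proof. by split=> //; exact: finite_measure_integrable_cst. Qed.

Lemma L1_boundedM (s f : T -> R) : measurable_fun setT s ->
  (forall w, `|s w| <= 1)%R -> L1 P f -> L1 P (fun w => s w * f w)%R.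
Proof.
move=> ms s_le1 [mf intf]; have msf : measurable_fun setT (fun w => s w * f w)%R.
  exact: measurable_funM.
split=> //; apply: le_integrable intf => //; first exact: measurableT_comp.
by move=> w _ /=; rewrite lee_fin normrM ler_piMl.
Qed.

Lemma integral_cst_prob (r : R) : \int[P]_w r%:E = r%:E.
Proof. by rewrite integral_cst //= probability_setT mule1. Qed.

Lemma integral_ge0_of_abs_shift (a : T -> R) : L1 P a ->
  (forall n : nat, n%:R%:E <= \int[P]_w `|(a w + n%:R)%:E|) ->
  0 <= \int[P]_w (a w)%:E.
Proof.
move=> [ma ia] hn.
pose f_ (n : nat) w := (`|a w + n%:R| - n%:R)%R%:E.
have mf n : measurable_fun setT (f_ n).
  apply: measurableT_comp => //; apply: measurable_funB => //.
  by apply: measurableT_comp => //; exact: measurable_funD.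
have f_dom : \forall w \ae P, forall n, setT w -> `|f_ n w| <= `|(a w)%:E|.
  apply: aeW => w n _; rewrite lee_fin.
  by have := ler_dist_dist (a w + n%:R)%R n%:R; rewrite addrK (ger0_norm (ler0n _ n)).
have f_cvg : \forall w \ae P, setT w -> f_ ^~ w @ \oo --> (a w)%:E.
  apply: aeW => w _; apply: cvg_near_cst; exists (Num.truncn `|a w|).+1 => // n /= an.
  have : (`|a w| < n%:R)%R by apply: lt_le_trans (truncnS_gt _) _; rewrite ler_nat.
  rewrite ltr_norml => /andP[an_lo _].
  by rewrite /f_ ger0_norm ?addrK //; lra.
have f_int_ge0 n : 0 <= \int[P]_w f_ n w.
  rewrite (eq_integral (fun w => `|a w + n%:R|%:E - n%:R%:E)); last first.
    by move=> w _; rewrite -EFinB.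
  rewrite (integralB_EFin (f1 := fun w => `|a w + n%:R|%R) (f2 := fun _ => n%:R)) //.
  - by rewrite integral_cst_prob sube_ge0.
  - apply: (eq_integrable measurableT (abse \o (EFin \o (a \+ cst n%:R)%R))) => //.
    exact/integrable_abse/(L1D (conj ma ia) (L1_cst n%:R)).2.
  - exact: (L1_cst n%:R).2.
have mEa : measurable_fun setT (EFin \o a) by exact: measurableT_comp.
have [_ _ cvg_int] :=
  dominated_convergence measurableT mf mEa f_cvg (integrable_abse ia) f_dom.
rewrite -(cvg_lim _ cvg_int) //.
by apply: lime_ge; [apply/cvg_ex; eexists; exact: cvg_int | exact: nearW].
Qed.

End L1_probability.

Section sign_of_set.
Context d (T : measurableType d) {R : realType}.

Definition sgn_set (A : set T) (w : T) : R := if w \in A then 1%R else (-1)%R.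

Lemma norm_sgn_set A w : `|sgn_set A w|%R = 1%R.
Proof. by rewrite /sgn_set; case: ifP; rewrite ?normrN normr1. Qed.

Lemma measurable_sgn_set A : measurable A -> measurable_fun setT (sgn_set A).
Proof.
move=> mA; rewrite (_ : sgn_set A = fun w => 2 * \1_A w - 1)%R.
  by apply: measurable_funB => //; apply: measurable_funM => //; exact: measurable_indic.
by apply/funext => w; rewrite /sgn_set indicE; case: (w \in A) => /=; lra.
Qed.

Lemma integral_sgn_setM (mu : {measure set T -> \bar R}) A (f : T -> R) :
  measurable A -> mu.-integrable setT (EFin \o f) ->
  \int[mu]_w (sgn_set A w * f w)%:E =
  \int[mu]_(w in A) (f w)%:E - \int[mu]_(w in ~` A) (f w)%:E.
Proof.
move=> mA intf; have mCA : measurable (~` A) by exact: measurableC.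
have mf : measurable_fun setT (EFin \o f) by case/integrableP: intf.
rewrite -(setUv A) integral_setU //; last 2 first.
- rewrite setUv; apply: measurableT_comp => //; apply: measurable_funM.
    exact: measurable_sgn_set.
  by move/measurable_EFinP : mf.
- by rewrite disj_set2E setICr.
congr (_ + _).
  by apply: eq_integral => w wA; rewrite /sgn_set wA mul1r.
rewrite (eq_integral (fun w => - (f w)%:E)); last first.
  by move=> w /set_mem nAw; rewrite /sgn_set memNset // mulN1r.
apply/integralN/(integrable_add_def mCA).
exact: integrableS measurableT mCA (subsetT _) intf.
Qed.

Lemma sgn_set_ltM (f g : T -> R) w :
  (sgn_set [set w | g w < f w] w * (f w - g w))%R = `|f w - g w|%R.
Proof.
rewrite /sgn_set; case: ifPn => [/set_mem /= gf|/negP gf].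
  by rewrite mul1r gtr0_norm // subr_gt0.
rewrite mulN1r ler0_norm ?opprB // subr_le0 leNgt.
by apply/negP => fg; apply: gf; exact/mem_set.
Qed.

End sign_of_set.

Section sub_sigma_algebra.
Context d (T : measurableType d) (R : realType) (P : probability T R)
  (H : set (set T)).
Hypothesis HH : complete_sub_sigma P H.

(* Viewing H as the sigma-algebra of the type [HT] gives access to the library's
   measurability lemmas. *)
Let HT := g_sigma_algebraType H.

Let measurable_HT : (measurable : set (set HT)) = H.
Proof. by case: HH => sH _ _; exact: measurable_g_measurableTypeE. Qed.

Lemma Hmeas_realP (f : T -> R) :
  Hmeas_real H f <-> measurable_fun [set: HT] (f : HT -> R).
Proof.
split=> [fH _ B mB|fH B mB]; first by rewrite setTI measurable_HT; exact: fH.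
by have := fH measurableT B mB; rewrite setTI measurable_HT.
Qed.

Lemma Hmeas_barP (f : T -> \bar R) :
  Hmeas_bar H f <-> measurable_fun [set: HT] (f : HT -> \bar R).
Proof.
split=> [fH _ B mB|fH B mB]; first by rewrite setTI measurable_HT; exact: fH.
by have := fH measurableT B mB; rewrite setTI measurable_HT.
Qed.

Lemma sub_sigma_measurable A : H A -> measurable A.
Proof. by case: HH => _ + _; apply. Qed.

Lemma Hmeas_real_measurable (f : T -> R) :
  Hmeas_real H f -> measurable_fun setT f.
Proof. by move=> fH _ B mB; rewrite setTI; exact/sub_sigma_measurable/fH. Qed.

Lemma Hmeas_bar_measurable (f : T -> \bar R) :
  Hmeas_bar H f -> measurable_fun setT f.
Proof. by move=> fH _ B mB; rewrite setTI; exact/sub_sigma_measurable/fH. Qed.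

Lemma Hmeas_EFin (f : T -> R) : Hmeas_real H f -> Hmeas_bar H (EFin \o f).
Proof. by move=> /Hmeas_realP fH; apply/Hmeas_barP; exact: measurableT_comp. Qed.

Lemma Hmeas_L1 (f : T -> R) :
  Hmeas_real H f -> P.-integrable setT (EFin \o f) -> L1 P f.
Proof. by move=> fH intf; split => //; exact: Hmeas_real_measurable. Qed.

Lemma Hmeas_sgn_set A : H A -> Hmeas_real H (sgn_set A : T -> R).
Proof. by move=> HA; apply/Hmeas_realP/measurable_sgn_set; rewrite measurable_HT. Qed.

Lemma sub_sigma_setC A : H A -> H (~` A).
Proof. by rewrite -measurable_HT; exact: measurableC. Qed.

Lemma sub_sigma_ltr (f g : T -> R) :
  Hmeas_real H f -> Hmeas_real H g -> H [set w | (f w < g w)%R].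
Proof.
move=> /Hmeas_realP mf /Hmeas_realP mg; rewrite -measurable_HT -[X in measurable X]setTI.
by apply: (measurable_fun_ltr mf mg).
Qed.

Lemma cond_exp_residual_setint0 X Y B : L1 P X -> is_cond_exp P H X Y -> H B ->
  \int[P]_(w in B) (X w - Y w)%:E = 0.
Proof.
move=> [_ intX] [_ intY Y_cond] HB; have mB := sub_sigma_measurable HB.
have intBX := integrableS measurableT mB (subsetT _) intX.
rewrite (eq_integral (fun w => (X w)%:E - (Y w)%:E)); last by move=> w _; rewrite EFinB.
rewrite integralB_EFin // ?Y_cond ?subee //; first exact: integrable_fin_num.
exact: integrableS measurableT mB (subsetT _) intY.
Qed.

End sub_sigma_algebra.

Section conditional_indicator.
Context d (T : measurableType d) (R : realType) (P : probability T R)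
  (H : set (set T)).
Hypothesis HH : complete_sub_sigma P H.
Variable I : (T -> R) -> (T -> \bar R).
Hypothesis HI : cond_indicator_L1 P H I.

Lemma cond_indicator_Hmeas_id (Z : T -> R) :
  L1 P Z -> Hmeas_real H Z -> I Z = (fun w => (Z w)%:E) %[ae P].
Proof.
move=> LZ HZ; case: HI => _ _ I_le_sup I_ge_inf.
have HZ' := Hmeas_EFin HH HZ.
have Z_sup : is_ess_supH P H (EFin \o Z) (EFin \o Z) by split => //; exact: aeW.
have Z_inf : is_ess_infH P H (EFin \o Z) (EFin \o Z).
  split => //; last exact: aeW.
  by apply/(Hmeas_barP HH); apply: measurableT_comp => //; exact/(Hmeas_barP HH).
near=> w => _; apply/eqP; rewrite eq_le; apply/andP; split.
- exact: (near (I_le_sup _ _ LZ Z_sup) w).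
- exact: (near (I_ge_inf _ _ LZ Z_inf) w).
Unshelve. all: by end_near. Qed.

Hypothesis I_contraction : forall X, L1 P X ->
  \int[P]_w `|I X w| <= \int[P]_w `|(X w)%:E|.

Lemma integrable_cond_indicator X : L1 P X -> P.-integrable setT (I X).
Proof.
move=> LX; case: HI => I_Hmeas _ _ _; apply/integrableP; split.
  exact/(Hmeas_bar_measurable HH)/I_Hmeas.
by apply: le_lt_trans (I_contraction LX) _; case: LX => _ /integrableP[].
Qed.

(* [fine] sends [+oo] and [-oo] to [0]; by [IrE] this only matters on a P-null set. *)
Definition Ir X w : R := fine (I X w).

Lemma IrE X : L1 P X -> I X = (fun w => (Ir X w)%:E) %[ae P].
Proof.
move=> LX; have := integrable_ae measurableT (integrable_cond_indicator LX).
by apply: filterS => w I_fin /I_fin /fineK.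
Qed.

Lemma Hmeas_Ir X : L1 P X -> Hmeas_real H (Ir X).
Proof.
move=> LX; case: HI => I_Hmeas _ _ _; apply/(Hmeas_realP HH).
by apply: measurableT_comp => //; exact/(Hmeas_barP HH)/I_Hmeas.
Qed.

Lemma Ir_contraction X : L1 P X ->
  \int[P]_w `|(Ir X w)%:E| <= \int[P]_w `|(X w)%:E|.
Proof.
move=> LX; suff -> : \int[P]_w `|(Ir X w)%:E| = \int[P]_w `|I X w|.
  exact: I_contraction.
apply: ae_eq_integral => //.
- apply/measurableT_comp/measurableT_comp => //.
  exact/(Hmeas_real_measurable HH)/Hmeas_Ir.
- case: HI => I_Hmeas _ _ _.
  exact/measurableT_comp/(Hmeas_bar_measurable HH)/I_Hmeas.
- by near=> w => _; rewrite (near (IrE LX) w).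
Unshelve. all: by end_near. Qed.

Lemma L1_Ir X : L1 P X -> L1 P (Ir X).
Proof.
move=> LX; have mIr := Hmeas_real_measurable HH (Hmeas_Ir LX); split => //.
apply/integrableP; split; first exact: measurableT_comp.
by apply: le_lt_trans (Ir_contraction LX) _; case: LX => _ /integrableP[].
Qed.

Lemma Ir_Hmeas_id Z : L1 P Z -> Hmeas_real H Z -> Ir Z = Z %[ae P].
Proof.
move=> LZ HZ; near=> w => _; apply: EFin_inj.
by rewrite -(near (IrE LZ) w) // (near (cond_indicator_Hmeas_id LZ HZ) w).
Unshelve. all: by end_near. Qed.

Hypothesis I_selfdual : forall X, L1 P X -> dual_ind I X = I X %[ae P].
Hypothesis I_sub_or_superadditive : subadditive_L1 P I \/ superadditive_L1 P I.

Lemma IrN X : L1 P X -> Ir (fun t => - X t)%R = (fun t => - Ir X t)%R %[ae P].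
Proof.
move=> LX; near=> w => _.
by rewrite /Ir -(near (I_selfdual LX) w) // /dual_ind fineN opprK.
Unshelve. all: by end_near. Qed.

Lemma Ir_subadditive X Y : L1 P X -> L1 P Y ->
  \forall w \ae P, (Ir (X \+ Y) w <= Ir X w + Ir Y w)%R.
Proof.
move=> LX LY; have LXY := L1D LX LY.
have NXY : ((fun t => - X t) \+ (fun t => - Y t))%R = (fun t => - (X \+ Y) t)%R.
  by apply/funext => t /=; rewrite opprD.
case: I_sub_or_superadditive => [Isub|Isup]; near=> w.
  rewrite -lee_fin EFinD -(near (IrE LXY) w) // -(near (IrE LX) w) //.
  by rewrite -(near (IrE LY) w) //; exact: (near (Isub _ _ LX LY) w).
rewrite -lerN2 opprD -(near (IrN LX) w) // -(near (IrN LY) w) //.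
rewrite -(near (IrN LXY) w) // -NXY -lee_fin EFinD.
rewrite -(near (IrE (L1N LX)) w) // -(near (IrE (L1N LY)) w) //.
rewrite -(near (IrE (L1D (L1N LX) (L1N LY))) w) //.
exact: (near (Isup _ _ (L1N LX) (L1N LY)) w).
Unshelve. all: by end_near. Qed.

Lemma IrD X Y : L1 P X -> L1 P Y ->
  Ir (X \+ Y)%R = (fun w => Ir X w + Ir Y w)%R %[ae P].
Proof.
move=> LX LY; have LNX := L1N LX; have LNY := L1N LY.
have NXY : ((fun t => - X t) \+ (fun t => - Y t))%R = (fun t => - (X \+ Y) t)%R.
  by apply/funext => t /=; rewrite opprD.
near=> w => _; apply/eqP; rewrite eq_le (near (Ir_subadditive LX LY) w) //=.
rewrite -lerN2 opprD -(near (IrN LX) w) // -(near (IrN LY) w) //.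
rewrite -(near (IrN (L1D LX LY)) w) // -NXY.
exact: (near (Ir_subadditive LNX LNY) w).
Unshelve. all: by end_near. Qed.

Lemma Ir_residual_shift X U : L1 P X -> Hmeas_real H U ->
  P.-integrable setT (EFin \o U) ->
  \int[P]_w `|(U w)%:E| <= \int[P]_w `|(X w - Ir X w + U w)%:E|.
Proof.
move=> LX HU intU; have LU := Hmeas_L1 HH HU intU.
pose Z := (U \+ (fun t => - Ir X t))%R.
have HZ : Hmeas_real H Z.
  apply/(Hmeas_realP HH); apply: measurable_funD; first exact/(Hmeas_realP HH).
  by apply: measurableT_comp => //; exact/(Hmeas_realP HH)/Hmeas_Ir.
have LZ : L1 P Z := L1D LU (L1N (L1_Ir LX)).
have LXZ := L1D LX LZ.
have -> : \int[P]_w `|(U w)%:E| = \int[P]_w `|(Ir (X \+ Z)%R w)%:E|.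
  apply: ae_eq_integral => //.
  - by apply/measurableT_comp/measurableT_comp => //; case: LU.
  - by apply/measurableT_comp/measurableT_comp => //; case: (L1_Ir LXZ).
  - near=> w => _; rewrite (near (IrD LX LZ) w) // (near (Ir_Hmeas_id LZ HZ) w) //.
    by rewrite /Z /= addrC subrK.
rewrite [leRHS](eq_integral (fun w => `|((X \+ Z)%R w)%:E|)).
  exact: Ir_contraction.
by move=> w _; rewrite /Z /= addrAC addrA.
Unshelve. all: by end_near. Qed.

Lemma Ir_residual_sign_ge0 X s : L1 P X -> Hmeas_real H s ->
  (forall w, `|s w| = 1)%R -> 0 <= \int[P]_w (s w * (X w - Ir X w))%:E.
Proof.
move=> LX Hs s1; have ms := Hmeas_real_measurable HH Hs.
have s_le1 w : (`|s w| <= 1)%R by rewrite s1.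
apply: integral_ge0_of_abs_shift.
  exact: L1_boundedM (L1D LX (L1N (L1_Ir LX))).
move=> n; pose u w := (s w * n%:R)%R.
have Hu : Hmeas_real H u.
  by apply/(Hmeas_realP HH); apply: measurable_funM => //; exact/(Hmeas_realP HH).
have := Ir_residual_shift LX Hu (L1_boundedM ms s_le1 (L1_cst P n%:R)).2.
rewrite (eq_integral (fun=> n%:R%:E)) ?integral_cst_prob; last first.
  by move=> w _ /=; rewrite /u normrM s1 mul1r ger0_norm.
rewrite (eq_integral (fun w => `|(s w * (X w - Ir X w) + n%:R)%:E|)) //.
by move=> w _ /=; rewrite /u norm_add_scale_sign.
Qed.

Lemma Ir_residual_sign_eq0 X s : L1 P X -> Hmeas_real H s ->
  (forall w, `|s w| = 1)%R -> \int[P]_w (s w * (X w - Ir X w))%:E = 0.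
Proof.
move=> LX Hs s1; apply/eqP; rewrite eq_le Ir_residual_sign_ge0 // andbT.
have HNs : Hmeas_real H (fun w => - s w)%R.
  by apply/(Hmeas_realP HH); apply: measurableT_comp => //; exact/(Hmeas_realP HH).
have := Ir_residual_sign_ge0 LX HNs (fun w => etrans (normrN _) (s1 w)).
rewrite (eq_integral (fun w => - (s w * (X w - Ir X w))%:E)); last first.
  by move=> w _; rewrite mulNr EFinN.
rewrite integralN ?oppe_ge0 //; apply: integrable_add_def => //.
have s_le1 w : (`|s w| <= 1)%R by rewrite s1.
exact: (L1_boundedM (Hmeas_real_measurable HH Hs) s_le1 (L1D LX (L1N (L1_Ir LX)))).2.
Qed.

Lemma Ir_cond_exp X Y : L1 P X -> is_cond_exp P H X Y -> Ir X = Y %[ae P].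
Proof.
move=> LX XY; have [HY intY _] := XY; have LY := Hmeas_L1 HH HY intY.
pose A := [set w | (Y w < Ir X w)%R].
have HA : H A := sub_sigma_ltr HH HY (Hmeas_Ir LX).
have sgnA_res_Y : \int[P]_w (sgn_set A w * (X w - Y w))%:E = 0.
  rewrite integral_sgn_setM; first last.
  - exact: (L1D LX (L1N LY)).2.
  - by apply: (sub_sigma_measurable HH).
  by rewrite !(cond_exp_residual_setint0 HH LX XY) ?sube0 //; apply: (sub_sigma_setC HH).
have sgnA_res_Ir := Ir_residual_sign_eq0 LX (Hmeas_sgn_set HH HA) (norm_sgn_set A).
have sgnA_s_le1 w : (`|sgn_set A w : R| <= 1)%R by rewrite norm_sgn_set.
have msgnA := Hmeas_real_measurable HH (Hmeas_sgn_set HH HA).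
have : \int[P]_w `|(Ir X w - Y w)%:E| = 0.
  rewrite -[RHS](subee (x := 0)) // -{1}sgnA_res_Y -sgnA_res_Ir -integralB_EFin //.
  - apply: eq_integral => w _; rewrite -EFinB /= -mulrBr -sgn_set_ltM.
    by congr (_ * _)%:E; lra.
  - exact: (L1_boundedM msgnA sgnA_s_le1 (L1D LX (L1N LY))).2.
  - exact: (L1_boundedM msgnA sgnA_s_le1 (L1D LX (L1N (L1_Ir LX)))).2.
have mIrY : measurable_fun setT (fun w => (Ir X w - Y w)%:E).
  by apply/measurableT_comp/measurable_funB => //; [case: (L1_Ir LX) | case: LY].
move/(ae_eq_integral_abs P measurableT mIrY); apply: filterS => w IrY /IrY /eqP.
by rewrite eqe subr_eq0 => /eqP.
Qed.

End conditional_indicator.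

Unset Implicit Arguments.

Theorem mainTheorem11 (d : measure_display) (T : measurableType d)
  (R : realType) (P : probability T R) (H : set (set T))
  (I : (T -> R) -> (T -> \bar R)) :
  measure_is_complete P ->
  complete_sub_sigma P H ->
  cond_indicator_L1 P H I ->
  (forall X, L1 P X -> dual_ind I X = I X %[ae P]) ->
  (subadditive_L1 P I \/ superadditive_L1 P I) ->
  (forall X, L1 P X ->
     \int[P]_w `|I X w| <= \int[P]_w `|(X w)%:E|) ->
  forall X Y, L1 P X -> is_cond_exp P H X Y ->
    I X = (fun w => (Y w)%:E) %[ae P].
Proof.
move=> _ HH HI I_selfdual I_sub_or_super I_contraction X Y LX XY.
have IrX_Y := Ir_cond_exp HH HI I_contraction I_selfdual I_sub_or_super LX XY.
near=> w => _.
by rewrite (near (IrE HH HI I_contraction LX) w) // (near IrX_Y w).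
Unshelve. all: by end_near. Qed.
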